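(* Let $\Phi=\bigvee_{j=1}^J\phi_j$ be a pleasant UCQ over $\Sigma$ and let $D$ be a structure over $\Sigma$. Then $\mathtt{cq}(\Phi)\odot\text{Þ}(D)=1+\Phi\odot D$.
   Context: Structures are finite relational structures; constants are interpreted in the vertex set $\mathcal V(D)$. For a CQ $\phi$ and structure $D$, $\phi\odot D$ is the number of maps $h:var(\phi)\to\mathcal V(D)$ sending every atom of $\phi$ (with constants interpreted) to a fact of $D$; for a UCQ $\Phi=\bigvee_j\phi_j$ (pairwise variable-disjoint disjuncts) $\Phi\odot D:=\sum_j\phi_j\odot D$. A query is pleasant if each atom contains at least one variable. Fix a relational signature $\Sigma$ (possibly with constants, not containing the symbols below) and $\Sigma^+=\Sigma\cup\{V,R,\mathsf{mars},\mathsf{venus}\}$ with $V,R$ fresh binary relations and $\mathsf{mars},\mathsf{venus}$ fresh constants. Let $\mathtt{Good}$ be the variable-free CQ consisting of $V(\mathsf{venus},\mathsf{venus})$, $R(\mathsf{venus},\mathsf{venus})$ and all atoms $A(t_1,\dots,t_k)$ with $A\in\Sigma$, each $t_i$ either $\mathsf{venus}$ or a constant of $\Sigma$, and $\mathsf{venus}$ occurring among the $t_i$ at least once. $\mathtt{Planet}(x):=R(\mathsf{venus},x)\wedge R(x,\mathsf{venus})$. $x\rhd\phi:=\phi\wedge\mathtt{Planet}(x)\wedge\bigwedge_{y\in var(\phi)}V(x,y)$. $\mathtt{RClique}_J(x_1,\dots,x_J):=\bigwedge_{j}\mathtt{Planet}(x_j)\wedge\bigwedge_{j<j'}(R(x_j,x_{j'})\wedge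 R(x_{j'},x_j))$. For a pleasant UCQ $\Phi=\bigvee_{j=1}^J\phi_j$ over $\Sigma$, $\mathtt{cq}(\Phi):=\mathtt{RClique}_J(x_1,\dots,x_J)\wedge\bigwedge_{j=1}^J(x_j\rhd\phi_j)$ with fresh variables $x_1,\dots,x_J$. The marsification $\text{Þ}(D)$ of a structure $D$ over $\Sigma$ is the structure over $\Sigma^+$ whose elements are those of $D$ together with two new distinct elements interpreting $\mathsf{mars}$ and $\mathsf{venus}$, and whose facts are: all atoms of $\mathtt{Good}\wedge\mathtt{Planet}(\mathsf{mars})$, all facts of $D$, and $V(\mathsf{mars},a)$ for every $a\in\mathcal V(D)$. *)

From mathcomp Require Import all_boot.

Set Implicit Arguments.
Unset Strict Implicit.
Unset Printing Implicit Defensive.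

Record signature := Signature {
  rsym : finType;
  sar  : rsym -> nat;
  csym : finType
}.

Record structure (S : signature) := Structure {
  dom : finType;
  cI  : csym S -> dom;
  rI  : forall A : rsym S, {set (sar A).-tuple dom}
}.

Definition term (S : signature) (X : Type) := (X + csym S)%type.

Definition atom (S : signature) (X : Type) :=
  {A : rsym S & (sar A).-tuple (term S X)}.

(* A CQ over S with variables drawn from X is the (finite) conjunction of
   its atoms, given as a list. *)
Definition CQ (S : signature) (X : Type) := seq (atom S X).

Section Counting.
Variables (S : signature) (X : finType).

Definition occurs (phi : CQ S X) (x : X) : bool :=
  has (fun a : atom S X => inl x \in (tagged a : seq (term S X))) phi.

Definition pleasant (phi : CQ S X) : bool :=
  all (fun a : atom S X =>
         has (fun t : term S X => if t is inl _ then true else false)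
             (tagged a : seq (term S X))) phi.

Variable D : structure S.

(* a partial map h : X -> V(D), defined exactly on var(phi), represents a
   map var(phi) -> V(D) *)
Definition termI (h : X -> option (dom D)) (t : term S X) : option (dom D) :=
  match t with inl x => h x | inr c => Some (cI D c) end.

Definition sent_to_fact (h : X -> option (dom D)) (a : atom S X) : bool :=
  [exists u : (sar (tag a)).-tuple (dom D),
     (map Some (u : seq _) == map (termI h) (tagged a : seq _))
     && (u \in rI D (tag a))].

(* phi (.) D : number of maps h : var(phi) -> V(D) sending every atom of
   phi to a fact of D. *)
Definition hcount (phi : CQ S X) : nat :=
  #|[set h : {ffun X -> option (dom D)} |
      [forall x, (h x != None) == occurs phi x] && all (sent_to_fact h) phi]|.
End Counting.

(* UCQ Phi = \/_{j < J} phi_j, disjuncts with pairwise disjoint variable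
   sets X j;  Phi (.) D = \sum_j phi_j (.) D. *)
Definition ucq_count (S : signature) (J : nat) (X : 'I_J -> finType)
    (Phi : forall j, CQ S (X j)) (D : structure S) : nat :=
  \sum_(j < J) hcount D (Phi j).

(* The extended signature Sigma^+ = Sigma + {V, R, mars, venus}         *)
(*   relation symbols : inl A (A in Sigma), inr true = V, inr false = R *)
(*   constants        : inl c (c in Sigma), inr true = mars,            *)
(*                      inr false = venus                              *)
Definition sarP (S : signature) (r : (rsym S + bool)%type) : nat :=
  match r with inl A => sar A | inr _ => 2 end.

Definition sigPlus (S : signature) : signature :=
  Signature (@sarP S) (csym S + bool)%type.

Section Plus.
Variable S : signature.

Definition relV : rsym (sigPlus S) := inr true.
Definition relR : rsym (sigPlus S) := inr false.
Definition cMars {Y : Type} : term (sigPlus S) Y := inr (inr true).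
Definition cVenus {Y : Type} : term (sigPlus S) Y := inr (inr false).

Definition binAtom {Y : Type} (b : bool) (s t : term (sigPlus S) Y)
  : atom (sigPlus S) Y :=
  @Tagged _ (inr b : rsym (sigPlus S))
    (fun r => (sar r).-tuple (term (sigPlus S) Y)) [tuple s; t].

Definition Vat {Y : Type} (s t : term (sigPlus S) Y) := binAtom true s t.
Definition Rat {Y : Type} (s t : term (sigPlus S) Y) := binAtom false s t.

Definition Planet {Y : Type} (x : Y) : CQ (sigPlus S) Y :=
  [:: Rat cVenus (inl x); Rat (inl x) cVenus].

Definition liftTerm {X Y : Type} (f : X -> Y) (t : term S X)
  : term (sigPlus S) Y :=
  match t with inl x => inl (f x) | inr c => inr (inl c) end.

Definition liftAtom {X Y : Type} (f : X -> Y) (a : atom S X)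
  : atom (sigPlus S) Y :=
  @Tagged _ (inl (tag a) : rsym (sigPlus S))
    (fun r => (sar r).-tuple (term (sigPlus S) Y))
    (map_tuple (liftTerm f) (tagged a)).

Definition liftCQ {X Y : Type} (f : X -> Y) (phi : CQ S X)
  : CQ (sigPlus S) Y := map (liftAtom f) phi.

Definition triangle {X : finType} {Y : Type} (f : X -> Y) (x : Y)
    (phi : CQ S X) : CQ (sigPlus S) Y :=
  liftCQ f phi ++ Planet x ++
  [seq Vat (inl x) (inl (f y)) | y <- enum (occurs phi)].

(* variables of cq(Phi): fresh x_1..x_J plus the disjoint union of the
   variables of the disjuncts *)
Definition cqVars (J : nat) (X : 'I_J -> finType) : finType :=
  ('I_J + {j : 'I_J & X j})%type.

Definition RClique (J : nat) (X : 'I_J -> finType) : CQ (sigPlus S) (cqVars X) :=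
  flatten [seq Planet (inl j : cqVars X) | j <- enum 'I_J] ++
  flatten [seq [:: Rat (inl (inl j : cqVars X)) (inl (inl j' : cqVars X));
                   Rat (inl (inl j' : cqVars X)) (inl (inl j : cqVars X))]
          | j <- enum 'I_J, j' <- filter (fun k : 'I_J => (j < k)%N) (enum 'I_J)].

Definition cqOf (J : nat) (X : 'I_J -> finType) (Phi : forall j, CQ S (X j))
  : CQ (sigPlus S) (cqVars X) :=
  RClique X ++
  flatten [seq triangle (fun y : X j => (inr (Tagged X y) : cqVars X))
                        (inl j : cqVars X) (Phi j) | j <- enum 'I_J].

(* Marsification.  Elements: inl a (a in D), inr true = mars,          *)
(* inr false = venus.                                                   *)
Variable D : structure S.

Definition mdom : finType := (dom D + bool)%type.
Definition eMars : mdom := inr true.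
Definition eVenus : mdom := inr false.

Definition mcI (c : csym (sigPlus S)) : mdom :=
  match c with inl k => inl (cI D k) | inr b => inr b end.

(* interpretations of the Good atoms A(t_1..t_k), A in Sigma: each t_i is
   venus (None) or a constant k of Sigma (Some k), venus occurring at
   least once *)
Definition goodFact (A : rsym S) (t : (sar A).-tuple mdom) : bool :=
  [exists u : (sar A).-tuple (option (csym S)),
     (None \in (u : seq _)) &&
     (t == map_tuple (fun o => if o is Some k then mcI (inl k) else eVenus) u)].

Definition marsRel (r : (rsym S + bool)%type) : {set (@sarP S r).-tuple mdom} :=
  match r return {set (@sarP S r).-tuple mdom} with
  | inl A => [set t | (t \in [set map_tuple inl u | u in rI D A]) || goodFact t]
  | inr true =>   (* V : V(venus,venus) from Good, V(mars,a) for a in V(D) *)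
      [set [tuple eVenus; eVenus]] :|: [set [tuple eMars; inl a] | a : dom D]
  | inr false =>  (* R : R(venus,venus) from Good, Planet(mars) *)
      [set [tuple eVenus; eVenus]; [tuple eVenus; eMars]; [tuple eMars; eVenus]]
  end.

Definition marsify : structure (sigPlus S) := @Structure (sigPlus S) mdom mcI marsRel.
End Plus.

From mathcomp Require Import all_boot.

(* A homomorphism h from cq(Phi) to the marsification sends every x_j to a
   planet, i.e. to venus or mars, and the R-clique forbids two x_j on mars,
   as R(mars, mars) is not a fact.  If every x_j goes to venus, V(venus, _)
   forces every other variable to venus too; the Good atoms (and pleasantness)
   make this a homomorphism, the unique one of this kind.  If x_j goes to
   mars, the variables of phi_j are sent by V(mars, _) into V(D), where the
   atoms of phi_j can only hit facts of D since every Good fact mentions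
   venus, while the other disjuncts again go to venus.  So the homomorphisms
   are one plus, for each j, the homomorphisms from phi_j to D. *)

Set Implicit Arguments.
Unset Strict Implicit.
Unset Printing Implicit Defensive.

Lemma all_flatten (T : Type) (P : pred T) (ss : seq (seq T)) :
  all P (flatten ss) = all (all P) ss.
Proof. by elim: ss => //= s ss IHss; rewrite all_cat IHss. Qed.

Lemma has_flatten (T : Type) (P : pred T) (ss : seq (seq T)) :
  has P (flatten ss) = has (has P) ss.
Proof. by elim: ss => //= s ss IHss; rewrite has_cat IHss. Qed.

Lemma mem_enumT (T : finType) (t : T) : t \in Finite.enum T.
Proof. by rewrite -enumT mem_enum. Qed.

Lemma big_option (R : Type) (idx : R) (op : Monoid.com_law idx)
    (T : finType) (F : option T -> R) :
  \big[op/idx]_(o : option T) F o = op (F None) (\big[op/idx]_(t : T) F (Some t)).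
Proof.
rewrite (bigD1 None) //=; congr (op _ _).
rewrite (reindex_omap Some id) => [|[t|] //].
by apply: eq_bigl => t /=; rewrite eqxx.
Qed.

Definition hom (S : signature) (X : finType) (D : structure S) (phi : CQ S X)
    (h : {ffun X -> option (dom D)}) : bool :=
  [forall x, (h x != None) == occurs phi x] && all (sent_to_fact h) phi.
Arguments hom {S X} D phi h.

Lemma hcountE (S : signature) (X : finType) (D : structure S) (phi : CQ S X) :
  hcount D phi = #|[set h | hom D phi h]|.
Proof. by []. Qed.

Lemma mem_liftTerm_inl (S : signature) (X Y : eqType) (f : X -> Y)
    (s : seq (term S X)) (y : Y) :
  inl y \in map (liftTerm f) s -> exists2 x, f x = y & inl x \in s.
Proof. by case/mapP=> -[x|c] xs //= [->]; exists x. Qed.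

Lemma sent_binAtom (S : signature) (E : structure (sigPlus S)) (Z : finType)
    (h : Z -> option (dom E)) (b : bool) (s t : term (sigPlus S) Z) :
  sent_to_fact h (binAtom b s t) =
  if (termI h s, termI h t) is (Some p, Some q)
  then [tuple p; q] \in rI E (inr b) else false.
Proof.
rewrite /sent_to_fact /=; apply/existsP/idP.
  case=> u /andP[/eqP e uE].
  case: (termI h s) e => [p|] e; case: (termI h t) e => [q|] e;
    try by case: u e uE => [[|? [|? [|? ?]]] //].
  have -> : [tuple p; q] = u.
    by apply/val_inj/(inj_map (@Some_inj _)); rewrite e.
  exact: uE.
case: (termI h s) => [p|] //; case: (termI h t) => [q|] // pqE.
by exists [tuple p; q]; rewrite pqE andbT.
Qed.

Section Marsification.
Variables (S : signature) (D : structure S).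
Local Notation venus := (eVenus D).
Local Notation mars := (eMars D).

Lemma mem_marsR (p q : mdom D) :
  ([tuple p; q] \in marsRel D (inr false)) =
  [|| (p == venus) && (q == venus), (p == venus) && (q == mars)
    | (p == mars) && (q == venus)].
Proof. by rewrite /= !inE -!val_eqE /= !eqseq_cons /= !andbT orbA. Qed.

Lemma mem_marsV (p q : mdom D) :
  ([tuple p; q] \in marsRel D (inr true)) =
  (p == venus) && (q == venus) || (p == mars) && (if q is inl _ then true else false).
Proof.
rewrite /= !inE -!val_eqE /= !eqseq_cons /= !andbT; congr (_ || _).
apply/imsetP/idP => [[a _ /(congr1 val) [-> ->]] | ]; first by rewrite eqxx.
by case/andP=> /eqP->; case: q => // a _; exists a.
Qed.

Section Lift.
Variables (X Y : finType) (f : X -> Y) (h : Y -> option (mdom D)).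

(* Good facts all mention venus, so an atom whose variables land in V(D)
   can only hit the facts of D itself. *)
Lemma sent_liftAtom_dom (g : X -> option (dom D)) (a : atom S X) :
  (forall x, h (f x) = omap inl (g x)) ->
  sent_to_fact (D := marsify D) h (liftAtom f a) = sent_to_fact g a.
Proof.
move=> hfE; rewrite /sent_to_fact /=.
have termE : map (termI (D := marsify D) h) (map (liftTerm f) (tagged a))
           = map (omap inl) (map (termI g) (tagged a)).
  by rewrite -!map_comp; apply: eq_map => -[x|c] /=; [exact: hfE|].
have omap_inl_inj : injective (omap (@inl (dom D) bool)) by move=> [?|] [?|] //= [->].
apply/existsP/existsP => [[u /andP[/eqP uE]] | [u /andP[/eqP uE uD]]].
  rewrite inE => /orP[/imsetP[v vD uv] | /existsP[w /andP[venus_w /eqP wE]]].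
    exists v; rewrite vD andbT; apply/eqP/(inj_map omap_inl_inj).
    by rewrite -termE -uE uv /= -!map_comp.
  suff : Some venus \in map (omap inl) (map (termI g) (tagged a)).
    by case/mapP=> -[?|] _.
  by rewrite -termE -uE wE /= -map_comp; apply/mapP; exists None.
exists (map_tuple inl u); rewrite inE; apply/andP; split.
  by apply/eqP; rewrite termE -uE /= -!map_comp.
by apply/orP; left; apply/imsetP; exists u.
Qed.

(* The image is a Good fact: pleasantness puts venus in it at least once. *)
Lemma sent_liftAtom_venus (a : atom S X) :
  has (fun t : term S X => if t is inl _ then true else false) (tagged a) ->
  (forall x, inl x \in (tagged a : seq _) -> h (f x) = Some venus) ->
  sent_to_fact (D := marsify D) h (liftAtom f a).
Proof.
move=> a_pleasant hfE; apply/existsP.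
pose toGood (t : term S X) := if t is inr c then Some c else None.
pose evalGood (o : option (csym S)) := if o is Some c then mcI D (inl c) else venus.
exists (map_tuple (evalGood \o toGood) (tagged a)); apply/andP; split.
  apply/eqP; rewrite /= -!map_comp; apply/eq_in_map => -[x|c] xa //=.
  by rewrite hfE.
rewrite inE; apply/orP; right; apply/existsP; exists (map_tuple toGood (tagged a)).
apply/andP; split; first by case/hasP: a_pleasant => -[x|//] xa _; apply/mapP; exists (inl x).
by apply/eqP/val_inj; rewrite /= map_comp.
Qed.

End Lift.
End Marsification.

Section CqOfMarsify.
Variables (S : signature) (J : nat) (X : 'I_J -> finType).
Variables (Phi : forall j : 'I_J, CQ S (X j)) (D : structure S).
Local Notation Y := (cqVars X).
Local Notation venus := (eVenus D).
Local Notation mars := (eMars D).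
Local Notation emb j := (fun y : X j => (inr (Tagged X y) : Y)).
Local Notation sent h a := (sent_to_fact (D := marsify D) h a).

Lemma emb_inj j : injective (emb j).
Proof. by move=> y y' e; apply: (@eq_from_Tagged _ X); case: e. Qed.

Lemma occurs_cqOf_inl j : occurs (cqOf Phi) (inl j).
Proof.
rewrite /occurs /cqOf /RClique !has_cat !has_flatten !has_map.
by apply/orP; left; apply/orP; left; apply/hasP; exists j; rewrite ?mem_enumT //= !inE eqxx.
Qed.

Lemma occurs_cqOf_emb j (y : X j) : occurs (cqOf Phi) (emb j y) = occurs (Phi j) y.
Proof.
rewrite /occurs /cqOf /RClique !has_cat !has_flatten !has_map.
apply/idP/idP => [|y_occ]; last first.
  apply/orP; right; apply/hasP; exists j; rewrite ?mem_enumT //= /triangle !has_cat.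
  rewrite !has_map orbC; apply/orP; left.
  by apply/hasP; exists y; rewrite ?mem_enum //= !inE eqxx orbT.
case/orP => [/orP[] /hasP[k _] // | /hasP[k _]] /=.
  by rewrite has_map => /hasP[k' _].
rewrite /triangle !has_cat /liftCQ !has_map => /or3P[/hasP[a a_k] | // | /hasP[y' y'_k]] /=.
  case/mem_liftTerm_inl=> y' yE y'_a.
  have kj : k = j by case: yE.
  move: y' a a_k yE y'_a; rewrite kj => y' a a_j /emb_inj -> y_a.
  by apply/hasP; exists a.
rewrite !inE /= => /eqP yE.
have kj : k = j by case: yE.
move: y' y'_k yE; rewrite kj => y'; rewrite mem_enum => y'_j.
by case=> /(@eq_from_Tagged _ X) ->.
Qed.

Lemma cqOf_domainP (h : Y -> option (mdom D)) :
  reflect ((forall j, h (inl j) != None) /\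
           (forall j (y : X j), (h (emb j y) != None) = occurs (Phi j) y))
          [forall x, (h x != None) == occurs (cqOf Phi) x].
Proof.
apply: (iffP forallP) => [hE | [h_inl h_emb] [j | [j y]]].
- split=> [j | j y]; first by have := hE (inl j); rewrite occurs_cqOf_inl => /eqP.
  by have := hE (emb j y); rewrite occurs_cqOf_emb => /eqP.
- by rewrite occurs_cqOf_inl h_inl.
- by rewrite (occurs_cqOf_emb y) h_emb.
Qed.

Local Notation xv j := (inl (inl j : Y) : term (sigPlus S) Y).
Local Notation cV := (cVenus S (Y := Y)).

Lemma all_sent_cqOfP (h : Y -> option (mdom D)) :
  all (fun a => sent h a) (cqOf Phi) <->
  [/\ forall j, sent h (Rat cV (xv j)) && sent h (Rat (xv j) cV),
      forall j j' : 'I_J, j < j' -> sent h (Rat (xv j) (xv j')) && sent h (Rat (xv j') (xv j)),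
      forall j, all (fun a => sent h (liftAtom (emb j) a)) (Phi j) &
      forall j (y : X j), occurs (Phi j) y -> sent h (Vat (xv j) (inl (emb j y)))].
Proof.
rewrite /cqOf /RClique /triangle /liftCQ !all_cat !all_flatten !all_map.
split=> [/andP[/andP[/allP planet /allP clique] /allP disj] | [planet clique disj link]].
  split=> [j | j j' jj' | j | j y y_occ].
  - by have /= /and3P[-> ->] := planet j (mem_enumT j).
  - have := clique j (mem_enumT j); rewrite /= all_map => /allP.
    by move/(_ j'); rewrite mem_filter jj' mem_enum => /(_ isT) /= /and3P[-> ->].
  - by have := disj j (mem_enumT j); rewrite /= all_cat all_map => /andP[].
  - have := disj j (mem_enumT j); rewrite /= all_cat /= !all_map => /and4P[_ _ _ /allP].
    by move/(_ y); rewrite mem_enum => /(_ y_occ).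
apply/andP; split; [apply/andP; split|]; apply/allP => j _ /=.
- by rewrite andbT planet.
- rewrite all_map; apply/allP => j'; rewrite mem_filter => /andP[jj' _] /=.
  by rewrite andbT clique.
- rewrite all_cat all_map disj /= all_map; case/andP: (planet j) => -> -> /=.
  by apply/allP => y; rewrite mem_enum => y_occ; exact: link.
Qed.

Local Notation cqHom h := (hom (marsify D) (cqOf Phi) h).

Definition venusOf j (y : X j) : option (mdom D) :=
  if occurs (Phi j) y then Some venus else None.

Definition marsIndex (h : {ffun Y -> option (mdom D)}) : option 'I_J :=
  [pick j | h (inl j) == Some mars].

Definition restrictDom j (h : {ffun Y -> option (mdom D)}) : {ffun X j -> option (dom D)} :=
  [ffun y => if h (emb j y) is Some (inl a) then Some a else None].

Lemma cqHom_planet h j : cqHom h -> h (inl j) = Some venus \/ h (inl j) = Some mars.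
Proof.
case/andP=> _ /all_sent_cqOfP[/(_ j) /andP[+ _] _ _ _].
rewrite sent_binAtom /=; case: (h (inl j)) => [q|] //; rewrite mem_marsR eqxx /=.
by case/or3P=> // /eqP ->; [left | right].
Qed.

(* There is no fact R(mars, mars). *)
Lemma cqHom_mars_unique h j j' : cqHom h ->
  h (inl j) = Some mars -> h (inl j') = Some mars -> j = j'.
Proof.
case/andP=> _ /all_sent_cqOfP[_ clique _ _] hj hj'.
have mars_edge (k k' : 'I_J) :
    k < k' -> h (inl k) = Some mars -> h (inl k') = Some mars -> False.
  by move=> kk' hk hk'; case/andP: (clique k k' kk'); rewrite sent_binAtom /= hk hk' mem_marsR.
case: (ltngtP j j') => [jj' | j'j | /val_inj //].
  by case: (mars_edge j j').
by case: (mars_edge j' j).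
Qed.

Lemma cqHom_emb_venus h j (y : X j) : cqHom h ->
  h (inl j) = Some venus -> h (emb j y) = venusOf y.
Proof.
case/andP=> /cqOf_domainP[_ dom_emb] /all_sent_cqOfP[_ _ _ link] hj.
rewrite /venusOf; case y_occ: (occurs (Phi j) y); last first.
  by have := dom_emb j y; rewrite y_occ; case: (h (emb j y)).
have := link j y y_occ; rewrite sent_binAtom /= hj.
by case: (h (emb j y)) => [q|] //; rewrite mem_marsV eqxx orbF => /eqP ->.
Qed.

Lemma cqHom_emb_mars h j (y : X j) : cqHom h ->
  h (inl j) = Some mars -> h (emb j y) = omap inl (restrictDom j h y).
Proof.
case/andP=> /cqOf_domainP[_ dom_emb] /all_sent_cqOfP[_ _ _ link] hj.
rewrite ffunE; case y_occ: (occurs (Phi j) y); last first.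
  by have := dom_emb j y; rewrite y_occ; case: (h (emb j y)).
have := link j y y_occ; rewrite sent_binAtom /= hj.
by case: (h (emb j y)) => [[a|b]|] //; rewrite mem_marsV.
Qed.

Section Constructions.
Hypothesis Phi_pleasant : forall j, pleasant (Phi j).

Lemma all_sent_liftAtom_venus j (h : Y -> option (mdom D)) :
  (forall y, occurs (Phi j) y -> h (emb j y) = Some venus) ->
  all (fun a => sent h (liftAtom (emb j) a)) (Phi j).
Proof.
move=> hE; have := Phi_pleasant j; rewrite /pleasant /occurs.
move: hE; rewrite /occurs; elim: (Phi j) => //= a phi IHphi hE /andP[a_pleasant phi_pleasant].
rewrite IHphi ?andbT => [|y y_phi|//]; last by rewrite hE // y_phi orbT.
by apply: sent_liftAtom_venus => // y y_a; rewrite hE // y_a.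
Qed.

Definition venusHom : {ffun Y -> option (mdom D)} :=
  [ffun x => if x is inr v then venusOf (tagged v) else Some venus].

Lemma cqHom_venusHom : cqHom venusHom.
Proof.
apply/andP; split.
  by apply/cqOf_domainP; split=> [j | j y]; rewrite ffunE //= /venusOf; case: occurs.
apply/all_sent_cqOfP; split=> [j | j j' _ | j | j y y_occ].
- by rewrite !sent_binAtom /= !ffunE mem_marsR.
- by rewrite !sent_binAtom /= !ffunE mem_marsR.
- by apply: all_sent_liftAtom_venus => y y_occ; rewrite ffunE /= /venusOf y_occ.
- by rewrite sent_binAtom /= !ffunE /= /venusOf y_occ mem_marsV.
Qed.

Lemma marsIndex_venusHom : marsIndex venusHom = None.
Proof. by rewrite /marsIndex; case: pickP => // j; rewrite ffunE. Qed.

Lemma cqHom_marsIndex_None h : cqHom h -> marsIndex h = None -> h = venusHom.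
Proof.
move=> h_hom; rewrite /marsIndex; case: pickP => // not_mars _.
have h_inl j : h (inl j) = Some venus.
  by case: (cqHom_planet j h_hom) => // hj; have := not_mars j; rewrite hj eqxx.
by apply/ffunP => -[j | [j y]]; rewrite ffunE //=; apply: cqHom_emb_venus.
Qed.

Definition marsHom j (g : {ffun X j -> option (dom D)}) : {ffun Y -> option (mdom D)} :=
  [ffun x => match x with
   | inl k => Some (if k == j then mars else venus)
   | inr v => untag (venusOf (tagged v)) (fun y : X j => omap inl (g y)) v
   end].

Section MarsHom.
Variables (j : 'I_J) (g : {ffun X j -> option (dom D)}).

Lemma marsHom_inl k : marsHom g (inl k) = Some (if k == j then mars else venus).
Proof. by rewrite ffunE. Qed.

Lemma marsHom_emb (y : X j) : marsHom g (emb j y) = omap inl (g y).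
Proof. by rewrite ffunE /= /untag; case: eqP => // p; rewrite eq_axiomK. Qed.

Lemma marsHom_emb_other k (y : X k) : k != j -> marsHom g (emb k y) = venusOf y.
Proof. by move=> kj; rewrite ffunE /= untag_dflt. Qed.

Lemma marsIndex_marsHom : marsIndex (marsHom g) = Some j.
Proof.
rewrite /marsIndex; case: pickP => [k | /(_ j)]; last by rewrite marsHom_inl !eqxx.
by rewrite marsHom_inl; case: (eqVneq k j) => [-> | _].
Qed.

Lemma cqHom_marsHom : hom D (Phi j) g -> cqHom (marsHom g).
Proof.
case/andP=> /forallP g_dom g_sent; apply/andP; split.
  apply/cqOf_domainP; split=> [k | k y]; first by rewrite marsHom_inl.
  have [kj | kj] := eqVneq k j; last by rewrite marsHom_emb_other // /venusOf; case: occurs.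
  by move: y; rewrite kj => y; rewrite marsHom_emb -(eqP (g_dom y)); case: (g y).
apply/all_sent_cqOfP; split=> [k | k k' kk' | k | k y y_occ].
- by rewrite !sent_binAtom /= !marsHom_inl; case: eqP; rewrite !mem_marsR /eVenus /eMars.
- rewrite !sent_binAtom /= !marsHom_inl.
  case: (eqVneq k j) (eqVneq k' j) => [kj | _] [k'j | _]; rewrite ?mem_marsR /eVenus /eMars //.
  by rewrite kj k'j ltnn in kk'.
- have [-> | kj] := eqVneq k j; last first.
    by apply: all_sent_liftAtom_venus => y y_occ; rewrite marsHom_emb_other // /venusOf y_occ.
  rewrite (eq_all (a2 := sent_to_fact g)) // => a.
  exact: sent_liftAtom_dom marsHom_emb.
- rewrite sent_binAtom /= marsHom_inl; have [kj | kj] := eqVneq k j; last first.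
    by rewrite marsHom_emb_other // /venusOf y_occ mem_marsV.
  move: y y_occ; rewrite kj => y y_occ; rewrite marsHom_emb.
  have : g y != None by rewrite (eqP (g_dom y)).
  by case: (g y) => //= a _; rewrite mem_marsV.
Qed.

End MarsHom.

Lemma marsHom_inj j : injective (@marsHom j).
Proof.
move=> g g' gg'; apply/ffunP => y.
have := marsHom_emb g y; rewrite gg' marsHom_emb.
by case: (g y) (g' y) => [a|] [a'|] //= [->].
Qed.

Lemma cqHom_marsIndex_Some h j : cqHom h -> marsIndex h = Some j ->
  hom D (Phi j) (restrictDom j h) /\ h = marsHom (restrictDom j h).
Proof.
move=> h_hom; rewrite /marsIndex; case: pickP => // k /eqP hj [kj]; subst k.
have h_inl k : k != j -> h (inl k) = Some venus.
  move=> kj; case: (cqHom_planet k h_hom) => // hk.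
  by move: kj; rewrite (cqHom_mars_unique h_hom hk hj) eqxx.
have h_emb y := cqHom_emb_mars y h_hom hj.
split.
  case/andP: (h_hom) => /cqOf_domainP[_ dom_emb] /all_sent_cqOfP[_ _ disj _].
  apply/andP; split.
    by apply/forallP => y; rewrite -dom_emb h_emb; case: (restrictDom j h y).
  by rewrite -(@eq_all _ _ (sent_to_fact _) (fun a => sent_liftAtom_dom a h_emb)) disj.
apply/ffunP => -[k | [k y]].
  by rewrite marsHom_inl; case: (eqVneq k j) => [-> // | kj]; exact: h_inl.
have [kj | kj] := eqVneq k j.
  by move: y; rewrite kj => y; rewrite marsHom_emb h_emb.
by rewrite marsHom_emb_other // (cqHom_emb_venus _ h_hom) // h_inl.
Qed.

Lemma card_cqHom_marsIndex_None : #|[set h | cqHom h & marsIndex h == None]| = 1.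
Proof.
rewrite -(cards1 venusHom); congr #|pred_of_set _|; apply/setP => h; rewrite !inE.
apply/andP/eqP => [[h_hom /eqP] | ->]; first exact: cqHom_marsIndex_None.
by rewrite cqHom_venusHom marsIndex_venusHom.
Qed.

Lemma card_cqHom_marsIndex_Some j :
  #|[set h | cqHom h & marsIndex h == Some j]| = hcount D (Phi j).
Proof.
rewrite hcountE -(card_imset _ (@marsHom_inj j)); congr #|pred_of_set _|.
apply/setP => h; rewrite !inE; apply/andP/imsetP => [[h_hom /eqP hj] | [g g_hom ->]].
  by have [g_hom hE] := cqHom_marsIndex_Some h_hom hj; exists (restrictDom j h); rewrite ?inE.
by rewrite inE in g_hom; rewrite cqHom_marsHom // marsIndex_marsHom.
Qed.

End Constructions.
End CqOfMarsify.

Theorem mainTheorem10 (S : signature) (J : nat) (X : 'I_J -> finType)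
    (Phi : forall j : 'I_J, CQ S (X j)) (D : structure S) :
  (forall j : 'I_J, pleasant (Phi j)) ->
  hcount (marsify D) (cqOf Phi) = 1 + ucq_count Phi D.
Proof.
move=> Phi_pleasant; rewrite hcountE -sum1dep_card.
rewrite (partition_big (@marsIndex S J X D) xpredT) //= big_option.
rewrite sum1dep_card card_cqHom_marsIndex_None //; congr (_ + _).
by apply: eq_bigr => j _; rewrite sum1dep_card card_cqHom_marsIndex_Some.
Qed.
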